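(* Let $\Xi>1$, $\rho:[1,\Xi]\to\mathbb{R}$ continuous, $Z>0$ and $c>-1$, and define for integers $l\geq 0$ \[ \rho_l:=\frac{\delta_{l,0}}{\sqrt{Z}}-\frac12\int_1^\Xi\frac{dT\,\rho(T)}{\sqrt{T+c}^{\,3+2l}}, \] assuming $\rho_0\neq 0$. For integers $B\geq 3$ and $0\le M\le B-3$ define \[ \gamma^M_B:=\frac{1}{\rho_0^{B-3}}\sum_{K=0}^{B-3-M}\frac{(B-3+K)!}{(B-3-M)!\,M!}\,B_{B-3-M,K}\Big(\Big\{-\frac{(2r+1)!!\,\rho_r}{(r+1)\rho_0}\Big\}_{r=1}^{B-2-M-K}\Big), \] and set $\gamma^M_B:=0$ for $M<0$ or $M>B-3$. Then $\gamma^M_3=\delta_{M,0}$, and for all $B\geq 4$ and $0\le M\le B-3$: \[ \sum_{j=0}^{B-3-M}\binom{M+j}{j}(2j+1)!!\,\rho_j\,\gamma^{M+j}_B=\gamma^{M-1}_{B-1}, \qquad \sum_{j=0}^{B-4-M}\binom{M+1+j}{j+1}(2j+3)!!\,\rho_j\,\gamma^{M+1+j}_B=(2M+B-1)\,\gamma^M_{B-1}. \] Moreover, $(\gamma^M_B)$ is the unique family of numbers with $\gamma^M_3=\delta_{M,0}$ satisfying the first of these equations for all $B\geq4$, $0\le M\le B-3$.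
   Context: Bell polynomials: $B_{0,k}(\{\})=\delta_{k,0}$, and for $n\geq1$, $B_{n,k}(x_1,\dots,x_{n-k+1})=\sum\frac{n!}{j_1!j_2!\cdots j_{n-k+1}!}\big(\frac{x_1}{1!}\big)^{j_1}\cdots\big(\frac{x_{n-k+1}}{(n-k+1)!}\big)^{j_{n-k+1}}$, the sum over nonnegative integers with $j_1+\dots+j_{n-k+1}=k$ and $1j_1+2j_2+\dots+(n-k+1)j_{n-k+1}=n$ (so $B_{n,0}=0$ for $n\ge1$). $(2j+1)!!=1\cdot3\cdots(2j+1)$, with $(-1)!!=1$. *)

From HB Require Import structures.
From mathcomp Require Import all_boot all_order all_algebra.
From mathcomp Require Import all_classical all_reals all_analysis.
Set Implicit Arguments. Unset Strict Implicit. Unset Printing Implicit Defensive.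
Import Order.TTheory GRing.Theory Num.Theory numFieldNormedType.Exports.
Local Open Scope ring_scope.

Definition odd_dfact (j : nat) : nat := \prod_(i < j.+1) (2 * i + 1)%N.

(* Partial Bell polynomial B_{n,k}(x_1, ..., x_{n-k+1}), with x given as a
   sequence x : nat -> R (only x 1, ..., x (n-k+1) are used).
   B_{0,k} = delta_{k,0}; for n >= 1 it is the sum over tuples
   (j_1, ..., j_{n-k+1}) of nonnegative integers (each necessarily <= k)
   with sum j_i = k and sum i j_i = n. Index i : 'I_(n+1-k) stands for i+1. *)
Definition bell {R : realType} (n k : nat) (x : nat -> R) : R :=
  if n == 0%N then (k == 0%N)%:R else
  \sum_(j : {ffun 'I_(n.+1 - k) -> 'I_k.+1} |
          ((\sum_(i < n.+1 - k) (j i : nat))%N == k) &&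
          ((\sum_(i < n.+1 - k) (i.+1 * j i))%N == n))
     ((n`!)%:R / (\prod_(i < n.+1 - k) ((j i)`!)%:R) *
      \prod_(i < n.+1 - k) (x i.+1 / (i.+1)`!%:R) ^+ (j i)).

Definition rho_l {R : realType} (Xi Z c : R) (rho : R -> R) (l : nat) : R :=
  (l == 0%N)%:R / Num.sqrt Z
  - 2^-1 * Rintegral lebesgue_measure `[1, Xi]%classic
      (fun T => rho T / (Num.sqrt (T + c)) ^+ (3 + 2 * l)).

Definition gamma_nat {R : realType} (r : nat -> R) (B M : nat) : R :=
  (r 0%N ^+ (B - 3))^-1 *
  \sum_(0 <= K < (B - 3 - M).+1)
     ((B - 3 + K)`!%:R / ((B - 3 - M)`!%:R * M`!%:R) *
      bell (B - 3 - M) K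
        (fun rr => - ((odd_dfact rr)%:R * r rr) / (rr.+1%:R * r 0%N))).

Definition gamma {R : realType} (r : nat -> R) (B : nat) (M : int) : R :=
  match M with
  | Posz m => if (3 <= B)%N && (m <= B - 3)%N then gamma_nat r B m else 0
  | Negz _ => 0
  end.

(* Put x_r = -(2r+1)!! rho_r / ((r+1) rho_0) and F(t) = \sum_(r >= 1) x_r t^r / r!.
   Since B_(m,K)(x) = m!/K! [t^m] F^K, the sum defining gamma^M_(n+3) collapses to
   n! / (M! rho_0^n) [t^(n-M)] G_n, where G_n = (1 - F)^-(n+1).  Up to the factor
   rho_0 / (j+1)!, the weights (a + b j) (2j+1)!! rho_j are the coefficients of
   W = a (1 - F) - b t F', and (1 - F) G_(n+1) = G_n, G_n' = (n+1) F' G_(n+1) give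
   (n+1) [t^k] (W G_(n+1)) = (a (n+1) - b k) [t^k] G_n; (a, b) = (1, 1) and (3, 2)
   yield the two identities.  Uniqueness: the j = 0 term of the first identity is
   rho_0 gamma^M_B, so induction on B and downwards on M determines every value.
   Power series are handled as polynomials truncated beyond the relevant degree. *)

From HB Require Import structures.
From mathcomp Require Import all_boot all_order all_algebra.
From mathcomp Require Import all_classical all_reals all_analysis.
From mathcomp Require Import zify ring.
Set Implicit Arguments. Unset Strict Implicit. Unset Printing Implicit Defensive.
Import Order.TTheory GRing.Theory Num.Theory numFieldNormedType.Exports.
Local Open Scope ring_scope.

Section PowerCoefficients.
Variable R : comNzRingType.
Implicit Types p q : {poly R}.

Lemma coef_exp_lt p K j : p`_0 = 0 -> (j < K)%N -> (p ^+ K)`_j = 0.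
Proof.
move=> p0; elim: K j => [//|K IHK] j ltjK.
rewrite exprS coefM big1 // => -[[|i] lti] _ /=; first by rewrite p0 mul0r.
by rewrite IHK ?mulr0 //; lia.
Qed.

Lemma coef_exp_eq p q N K j : p`_0 = 0 -> q`_0 = 0 ->
  (forall i, (i <= N)%N -> p`_i = q`_i) ->
  (j < N + K)%N -> (p ^+ K)`_j = (q ^+ K)`_j.
Proof.
move=> p0 q0 epq; elim: K j => [|K IHK] j ltj; first by rewrite !expr0.
rewrite !exprS !coefM; apply: eq_bigr => -[i lti] _ /=.
have [leiN | ltNi] := leqP i N; last by rewrite !coef_exp_lt ?mulr0 //; lia.
by case: i lti leiN => [|i] lti leiN; rewrite ?p0 ?q0 ?mul0r // epq // IHK //; lia.
Qed.

Definition tseries (c : nat -> R) D : {poly R} := \sum_(i < D) c i *: 'X^(i.+1).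

Lemma coef_tseries c D j :
  (tseries c D)`_j = if (0 < j <= D)%N then c j.-1 else 0.
Proof.
rewrite coef_sum; under eq_bigr do rewrite coefZ coefXn.
case: j => [|j] /=; first by rewrite big1 // => i _; rewrite mulr0.
transitivity (\sum_(i < D | (i : nat) == j) c i).
  rewrite [RHS]big_mkcond; apply: eq_bigr => i _ /=; rewrite eqSS eq_sym.
  by case: eqP; rewrite ?mulr1 ?mulr0.
by rewrite big_ord1_eq.
Qed.

Lemma tseries_coef0 c D : (tseries c D)`_0 = 0.
Proof. by rewrite coef_tseries. Qed.
End PowerCoefficients.

Section NegativeBinomialSeries.
Variables (R : comNzRingType) (F : {poly R}) (D : nat).

(* The truncation of (1 - F)^-(n+1) at degree D in F. *)
Definition negbin n : {poly R} :=
  \sum_(0 <= K < D.+1) 'C(n + K, K)%:R *: F ^+ K.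

Lemma negbin_head n :
  negbin n = 1 + \sum_(0 <= K < D) 'C(n + K.+1, K.+1)%:R *: F ^+ K.+1.
Proof. by rewrite /negbin big_nat_recl // addn0 bin0 expr0 scale1r. Qed.

Lemma mul1BF_negbin n :
  (1 - F) * negbin n.+1 = negbin n - 'C(n.+1 + D, D)%:R *: F ^+ D.+1.
Proof.
have shiftF : F * negbin n.+1 =
    \sum_(0 <= K < D) 'C(n.+1 + K, K)%:R *: F ^+ K.+1
    + 'C(n.+1 + D, D)%:R *: F ^+ D.+1.
  rewrite /negbin mulr_sumr big_nat_recr //=.
  by congr (_ + _); [apply: eq_bigr => K _|]; rewrite -scalerAr -exprS.
have pascal : \sum_(0 <= K < D) 'C(n.+1 + K.+1, K.+1)%:R *: F ^+ K.+1 =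
    \sum_(0 <= K < D) 'C(n.+1 + K, K)%:R *: F ^+ K.+1
    + \sum_(0 <= K < D) 'C(n + K.+1, K.+1)%:R *: F ^+ K.+1.
  rewrite -big_split /=; apply: eq_bigr => K _.
  by rewrite addnS binS addSnnS natrD scalerDl addrC.
rewrite mulrBl mul1r shiftF !negbin_head pascal.
set S1 := \sum_(0 <= K < D) _; set S2 := \sum_(0 <= K < D) _; ring.
Qed.

Lemma deriv_negbin n : (negbin n)^`() =
  n.+1%:R *: (F^`() * \sum_(0 <= K < D) 'C(n.+1 + K, K)%:R *: F ^+ K).
Proof.
rewrite negbin_head derivD derivC add0r raddf_sum /= mulr_sumr scaler_sumr.
apply: eq_bigr => K _.
rewrite derivZ deriv_exp /= -scalerAr scalerA -scaler_nat scalerA -!natrM.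
congr (_%:R *: _); rewrite mulnC mul_bin_left -addSnnS.
by congr (_ * _)%N; lia.
Qed.

Hypothesis F0 : F`_0 = 0.

Lemma coef_deriv_negbin n k : (k < D)%N ->
  (negbin n)`_k.+1 * k.+1%:R = n.+1%:R * (F^`() * negbin n.+1)`_k.
Proof.
move=> ltkD.
have top0 : (F^`() * F ^+ D)`_k = 0.
  by rewrite coefM big1 // => i _; rewrite coef_exp_lt ?mulr0 //; lia.
rewrite mulr_natr -coef_deriv deriv_negbin coefZ /negbin big_nat_recr //=.
by rewrite mulrDr coefD -scalerAr coefZ top0 mulr0 addr0 mulr_natl.
Qed.

Definition weight (a b : R) : {poly R} := a *: (1 - F) - b *: ('X * F^`()).

Lemma coef_weight_negbin (a b : R) n k : (k <= D)%N ->
  n.+1%:R * (weight a b * negbin n.+1)`_k = (a * n.+1%:R - b * k%:R) * (negbin n)`_k.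
Proof.
move=> lekD.
rewrite /weight mulrBl -!scalerAl mul1BF_negbin -mulrA !coefB !coefZ coefB coefZ coefXM.
rewrite coef_exp_lt // mulr0 subr0.
case: k lekD => [|k] ltkD /=; first by ring.
rewrite mulrBr [n.+1%:R * (b * _)]mulrCA -coef_deriv_negbin //; ring.
Qed.
End NegativeBinomialSeries.

Section Factorials.
Variable R : numFieldType.

Lemma natf_fact_neq0 m : (m`!%:R : R) != 0.
Proof. by rewrite pnatr_eq0 -lt0n fact_gt0. Qed.

Lemma natr_bin_fact m j : 'C(m + j, j)%:R = (m + j)`!%:R / (j`!%:R * m`!%:R) :> R.
Proof.
by rewrite -(bin_fact (leq_addl m j)) addnK !natrM mulfK ?mulf_neq0 ?natf_fact_neq0.
Qed.
End Factorials.

Section Multinomial.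
Variables (R : numFieldType) (A : comAlgType R).

(* The multinomial theorem is read off from the coefficient of 'X^K in
   \prod_i exp(b_i 'X) = exp((\sum_i b_i) 'X), with exp truncated at degree K. *)
Definition texp K (a : A) : {poly A} :=
  \sum_(l < K.+1) (l`!%:R^-1 *: a ^+ l)%:P * 'X^l.

Lemma coef_texp K a l : (l <= K)%N -> (texp K a)`_l = l`!%:R^-1 *: a ^+ l.
Proof.
move=> lelK; rewrite coef_sum; under eq_bigr do rewrite coefCM coefXn.
transitivity (\sum_(i < K.+1 | (i : nat) == l) (i`!%:R^-1 *: a ^+ i : A)).
  rewrite [RHS]big_mkcond; apply: eq_bigr => i _ /=; rewrite eq_sym.
  by case: eqP; rewrite ?mulr1 ?mulr0.
by rewrite (big_ord1_eq _ (fun i => i`!%:R^-1 *: a ^+ i)) ltnS lelK.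
Qed.

Lemma coef_prod_texp K (I : Type) (b : I -> A) (s : seq I) l : (l <= K)%N ->
  (\prod_(i <- s) texp K (b i))`_l = l`!%:R^-1 *: (\sum_(i <- s) b i) ^+ l.
Proof.
elim: s l => [|x s IHs] l lelK.
  rewrite !big_nil coef1 expr0n; case: l lelK => [|l] _ /=; last by rewrite scaler0.
  by rewrite invr1 scale1r.
rewrite !big_cons coefM addrC exprDn scaler_sumr; apply: eq_bigr => -[u ltul] _ /=.
rewrite coef_texp ?IHs; [|lia|lia].
rewrite -scalerAl -scalerAr scalerA -[_ *+ 'C(l, u)]scaler_nat scalerA.
congr (_ *: _); last by rewrite mulrC.
have leul : (u <= l)%N by lia.
rewrite -(bin_fact leul) !natrM.
have binl_neq0 : ('C(l, u)%:R : R) != 0 by rewrite pnatr_eq0 -lt0n bin_gt0.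
by field; rewrite binl_neq0 !natf_fact_neq0.
Qed.

Lemma multinomial (I : finType) (b : I -> A) K :
  \sum_(j : {ffun I -> 'I_K.+1} | (\sum_i (j i : nat) == K)%N)
     \prod_i ((j i)`!%:R^-1 *: b i ^+ j i) = K`!%:R^-1 *: (\sum_i b i) ^+ K.
Proof.
rewrite -(@coef_prod_texp K) // /texp bigA_distr_bigA coef_sum.
rewrite [LHS]big_mkcond; apply: eq_bigr => j _ /=.
rewrite big_split /= -rmorph_prod prodrXr coefCM coefXn eq_sym.
by case: eqP; rewrite ?mulr1 ?mulr0 // -scaler_prod.
Qed.
End Multinomial.

Section BellPolynomials.
Variable R : realType.

Definition egf (x : nat -> R) D := tseries (fun i => x i.+1 / i.+1`!%:R) D.

Lemma bell_egf m K (x : nat -> R) D : (m < D)%N ->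
  bell m K x = m`!%:R / K`!%:R * (egf x D ^+ K)`_m.
Proof.
case: m => [|m] ltmD.
  rewrite /bell /=; case: K => [|K]; first by rewrite expr0 coef1 divr1 mulr1.
  by rewrite coef_exp_lt ?tseries_coef0 ?mulr0.
(* [bell] only uses the coefficients x_1, ..., x_(m+2-K). *)
set N := (m.+2 - K)%N.
have -> : (egf x D ^+ K)`_m.+1 = (egf x N ^+ K)`_m.+1.
  apply: (@coef_exp_eq _ _ _ N); rewrite ?tseries_coef0 //; last by lia.
  by move=> i leiN; rewrite !coef_tseries; congr (if _ then _ else _); lia.
have -> : egf x N ^+ K = K`!%:R *: (K`!%:R^-1 *: egf x N ^+ K).
  by rewrite scalerA divff ?natf_fact_neq0 // scale1r.
rewrite -multinomial coefZ coef_sum mulrA divfK ?natf_fact_neq0 // mulr_sumr.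
rewrite /bell /= big_mkcondr; apply: eq_bigr => j _.
have -> : \prod_(i < N) ((j i)`!%:R^-1 *: ((x i.+1 / i.+1`!%:R) *: 'X^(i.+1)) ^+ j i)
    = (\prod_(i < N) ((j i)`!%:R^-1 * (x i.+1 / i.+1`!%:R) ^+ j i))
      *: 'X^(\sum_(i < N) i.+1 * j i).
  rewrite -prodrXr -scaler_prod; apply: eq_bigr => i _.
  by rewrite exprZn scalerA exprM.
rewrite coefZ coefXn eq_sym; case: eqP => _; rewrite ?mulr0 // mulr1.
by rewrite big_split /= prodfV mulrA.
Qed.
End BellPolynomials.

Section RecurrenceUniqueness.
Variables (R : idomainType) (r : nat -> R).
Hypothesis r0 : r 0%N != 0.

Definition solves_recurrence (g : nat -> int -> R) : Prop :=
  [/\ forall B (M : int), (3 <= B)%N ->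
        ((M < 0)%R \/ (B - 3)%N%:Z < M) -> g B M = 0,
      forall M : int, g 3%N M = (M == 0)%:R &
      forall B M : nat, (4 <= B)%N -> (M <= B - 3)%N ->
        \sum_(0 <= j < B - 2 - M)
           ('C(M + j, j)%:R * (odd_dfact j)%:R * r j * g B (M + j)%N%:Z)
        = g B.-1 (M%:Z - 1)].

Lemma recurrence_unique g h : solves_recurrence g -> solves_recurrence h ->
  forall B M, (3 <= B)%N -> g B M = h B M.
Proof.
move=> [g_out g3 g_rec] [h_out h3 h_rec] B M le3B.
have [n ->] : exists n, B = n.+3 by exists (B - 3)%N; lia.
elim: n M => [|n IHn] M; first by rewrite g3 h3.
have agree k m : (m + k = n.+1)%N -> g n.+4 m = h n.+4 m.
  elim/ltn_ind: k m => k IHk m emk.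
  have lemB : (m <= n.+4 - 3)%N by lia.
  have := g_rec n.+4 m isT lemB; rewrite IHn -(h_rec n.+4 m isT lemB).
  rewrite (_ : n.+4 - 2 - m = k.+1)%N; last by lia.
  rewrite !big_nat_recl // addn0 bin0 /odd_dfact big_ord1 !mul1r.
  rewrite (eq_big_nat _ _ (F2 := fun i => 'C(m + i.+1, i.+1)%:R
      * (odd_dfact i.+1)%:R * r i.+1 * h n.+4 (m + i.+1)%N%:Z)).
    by move/addIr/(mulfI r0).
  by move=> i /andP[_ ltik]; rewrite (IHk (k - i.+1)%N) //; lia.
case: M => [m|m]; last by rewrite g_out ?h_out //; left.
have [ltnm | lemn] := ltnP n.+1 m; last by apply: (agree (n.+1 - m)%N); lia.
by rewrite g_out ?h_out //; right; rewrite ltz_nat; lia.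
Qed.
End RecurrenceUniqueness.

Section Gamma.
Variables (R : realType) (r : nat -> R).
Hypothesis r0 : r 0%N != 0.

Definition bell_args (i : nat) : R := - ((odd_dfact i)%:R * r i) / (i.+1%:R * r 0%N).

Local Notation F D := (egf bell_args D).
Local Notation G D n := (negbin (F D) D n).

Lemma gamma_nat_negbin n M D : (n < D)%N ->
  gamma_nat r n.+3 M = (r 0%N ^+ n)^-1 * (n`!%:R / M`!%:R) * (G D n)`_(n - M).
Proof.
move=> ltnD; rewrite /gamma_nat !subSS subn0 -mulrA; congr (_ * _).
set m := (n - M)%N; have ltmD : (m < D)%N by lia.
under eq_bigr do rewrite (bell_egf _ _ ltmD).
rewrite coef_sum [in RHS](big_cat_nat _ (n := m.+1)) //=; last by lia.
rewrite [X in _ + X]big_nat_cond [X in _ + X]big1 ?addr0; last first.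
  move=> K /andP[/andP[ltmK _] _].
  by rewrite coefZ coef_exp_lt ?tseries_coef0 ?mulr0.
rewrite mulr_sumr; apply: eq_bigr => K _; rewrite coefZ natr_bin_fact.
by field; rewrite !natf_fact_neq0.
Qed.

Lemma coef_weight_egf (a b : R) D j : (j <= D)%N ->
  r 0%N * (weight (F D) a b)`_j * j.+1`!%:R
  = (a + b * j%:R) * ((odd_dfact j)%:R * r j).
Proof.
move=> lejD; rewrite /weight coefB !coefZ coefB coef1 coefXM.
case: j lejD => [|j] lejD /=.
  by rewrite tseries_coef0 /odd_dfact big_ord1 muln0 factS fact0; ring.
rewrite coef_deriv coef_tseries /= lejD /bell_args -mulr_natr (factS j.+1) natrM.
by field; rewrite natf_fact_neq0 r0 -natrD pnatr_eq0.
Qed.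

Lemma sum_weighted_gamma_nat (a b : R) n L : (L <= n.+1)%N ->
  \sum_(j < n.+2 - L) (a + b * j%:R) * ((odd_dfact j)%:R * r j) / j.+1`!%:R
      * (L + j)`!%:R * gamma_nat r n.+4 (L + j)
  = (r 0%N ^+ n)^-1 * n`!%:R * (a * n.+1%:R - b * (n.+1 - L)%:R)
      * (G n.+2 n)`_(n.+1 - L).
Proof.
move=> leLn; set k := (n.+1 - L)%N.
rewrite (_ : n.+2 - L = k.+1)%N; last by lia.
set W := weight (F n.+2) a b.
have term (j : 'I_k.+1) :
    (a + b * j%:R) * ((odd_dfact j)%:R * r j) / j.+1`!%:R
      * (L + j)`!%:R * gamma_nat r n.+4 (L + j)
    = (r 0%N ^+ n)^-1 * n.+1`!%:R * (W`_j * (G n.+2 n.+1)`_(k - j)).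
  have ltjk := ltn_ord j.
  rewrite (@gamma_nat_negbin n.+1 (L + j) n.+2) //.
  rewrite (_ : n.+1 - (L + j) = k - j)%N; last by lia.
  rewrite -(coef_weight_egf a b (D := n.+2)); last by lia.
  by rewrite exprS; field; rewrite expf_neq0 // r0 !natf_fact_neq0.
rewrite (eq_bigr _ (fun j _ => term j)) -mulr_sumr -coefM.
rewrite -[RHS]mulrA -(coef_weight_negbin (tseries_coef0 _ _)); last by lia.
by rewrite factS natrM; ring.
Qed.

Lemma gammaE B M : (3 <= B)%N -> (M <= B - 3)%N -> gamma r B M = gamma_nat r B M.
Proof. by move=> le3B leMB; rewrite /gamma le3B leMB. Qed.

Lemma gamma_out B (M : int) : (M < 0)%R \/ (B - 3)%N%:Z < M -> gamma r B M = 0.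
Proof.
case: M => [m|//] [//|]; rewrite ltz_nat => ltBm.
by rewrite /gamma (leqNgt m) ltBm andbF.
Qed.

Lemma gamma3 M : gamma r 3 M = (M == 0)%:R.
Proof.
case: M => [[|m]|m] //.
rewrite /gamma /= /gamma_nat big_nat1 /bell /= subnn addn0 subn0 fact0 expr0.
by rewrite invr1 !mul1r mulr1 invr1.
Qed.

Lemma gamma_rec1 B M : (4 <= B)%N -> (M <= B - 3)%N ->
  \sum_(0 <= j < B - 2 - M)
     ('C(M + j, j)%:R * (odd_dfact j)%:R * r j * gamma r B (M + j)%N%:Z)
  = gamma r B.-1 (M%:Z - 1).
Proof.
move=> le4B; have [n ->] : exists n, B = n.+4 by exists (B - 4)%N; lia.
rewrite -[n.+4.-1]/n.+3 !subSS !subn0 => leMn; rewrite big_mkord.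
transitivity (M`!%:R^-1 * \sum_(j < n.+2 - M) (1 + 1 * j%:R)
    * ((odd_dfact j)%:R * r j) / j.+1`!%:R * (M + j)`!%:R * gamma_nat r n.+4 (M + j)).
  rewrite mulr_sumr; apply: eq_bigr => j _.
  rewrite gammaE //; last by have := ltn_ord j; lia.
  by rewrite natr_bin_fact factS natrM; field; rewrite !natf_fact_neq0 nat1r pnatr_eq0.
rewrite sum_weighted_gamma_nat //.
case: M leMn => [|m] leSmSn; first by rewrite subn0 !mul1r subrr mulr0 mul0r mulr0.
rewrite (_ : m.+1%:Z - 1 = m%:Z); last by rewrite -addn1 PoszD addrK.
have lemn : (m <= n)%N by lia.
rewrite gammaE //; last by lia.
rewrite (@gamma_nat_negbin n m n.+2) // subSS natrB // factS natrM.
by field; rewrite natf_fact_neq0 expf_neq0 // nat1r pnatr_eq0.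
Qed.

Lemma gamma_rec2 B M : (4 <= B)%N -> (M <= B - 3)%N ->
  \sum_(0 <= j < B - 3 - M)
     ('C(M + 1 + j, j.+1)%:R * (odd_dfact j.+1)%:R * r j
        * gamma r B (M + 1 + j)%N%:Z)
  = (2 * M + B - 1)%N%:R * gamma r B.-1 M%:Z.
Proof.
move=> le4B; have [n ->] : exists n, B = n.+4 by exists (B - 4)%N; lia.
rewrite -[n.+4.-1]/n.+3 !subSS !subn0 => leMSn.
have [ltnM | leMn] := ltnP n M.
  rewrite (_ : n.+1 - M = 0)%N ?big_geq ?gamma_out ?mulr0 //; last by lia.
  by right; rewrite ltz_nat; lia.
rewrite (_ : n.+1 - M = n.+2 - M.+1)%N // big_mkord.
transitivity (M`!%:R^-1 * \sum_(j < n.+2 - M.+1) (3 + 2 * j%:R)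
    * ((odd_dfact j)%:R * r j) / j.+1`!%:R * (M.+1 + j)`!%:R
    * gamma_nat r n.+4 (M.+1 + j)).
  rewrite mulr_sumr; apply: eq_bigr => j _.
  rewrite addn1 gammaE //; last by have := ltn_ord j; lia.
  rewrite addSnnS natr_bin_fact -addSnnS /odd_dfact big_ord_recr /= natrM.
  by field; rewrite !natf_fact_neq0.
rewrite sum_weighted_gamma_nat // gammaE //; last by lia.
rewrite (@gamma_nat_negbin n M n.+2) // subSS natrB //.
rewrite (_ : 2 * M + n.+4 - 1 = 2 * M + n.+3)%N; last by lia.
by field; rewrite natf_fact_neq0 expf_neq0.
Qed.

Lemma gamma_solves_recurrence : solves_recurrence r (gamma r).
Proof. by split=> [B M _|M|]; [exact: gamma_out | exact: gamma3 | exact: gamma_rec1]. Qed.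
End Gamma.

Theorem proposition7 (R : realType) (Xi : R) (rho : R -> R) (Z c : R)
  (hXi : 1 < Xi)
  (hrho : {within `[1, Xi], continuous rho}%classic)
  (hZ : 0 < Z) (hc : -1 < c)
  (h0 : rho_l Xi Z c rho 0%N != 0) :
  let r := rho_l Xi Z c rho in
  (forall M : int, gamma r 3 M = (M == 0)%:R) /\
  (forall B M : nat, (4 <= B)%N -> (M <= B - 3)%N ->
     \sum_(0 <= j < B - 2 - M)
        ('C(M + j, j)%:R * (odd_dfact j)%:R * r j * gamma r B (M + j)%N%:Z)
     = gamma r B.-1 (M%:Z - 1)) /\
  (forall B M : nat, (4 <= B)%N -> (M <= B - 3)%N ->
     \sum_(0 <= j < B - 3 - M)
        ('C(M + 1 + j, j.+1)%:R * (odd_dfact j.+1)%:R * r j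
           * gamma r B (M + 1 + j)%N%:Z)
     = (2 * M + B - 1)%N%:R * gamma r B.-1 M%:Z) /\
  (forall g : nat -> int -> R,
     (forall B (M : int), (3 <= B)%N ->
        ((M < 0)%R \/ (B - 3)%N%:Z < M) -> g B M = 0) ->
     (forall M : int, g 3%N M = (M == 0)%:R) ->
     (forall B M : nat, (4 <= B)%N -> (M <= B - 3)%N ->
        \sum_(0 <= j < B - 2 - M)
           ('C(M + j, j)%:R * (odd_dfact j)%:R * r j * g B (M + j)%N%:Z)
        = g B.-1 (M%:Z - 1)) ->
     forall B (M : int), (3 <= B)%N -> g B M = gamma r B M).
Proof.
move=> r; have r0 : r 0%N != 0 := h0.
split; first exact: gamma3.
split; first exact: gamma_rec1 r0.
split; first exact: gamma_rec2 r0.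
move=> g g_out g3 g_rec B M le3B. apply: (recurrence_unique r0) le3B; first by split.
exact: gamma_solves_recurrence.
Qed.
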